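(* Let $c<1$ be a constant and $p=p(n)=\frac{c}{n}$. Then $\mathbb{P}_{n,p}\big(G \text{ is realizable in } \mathbb{R}^2 \text{ as a distance graph}\big)\to 1$ as $n\to\infty$, where $G$ is the random graph $G(n,p)$.
   Context: $G(n,p)$ is the Erdős–Rényi random graph on $n$ labelled vertices in which each of the $\binom n2$ possible edges is present independently with probability $p$ ($p$ may depend on $n$); $\mathbb{P}_{n,p}$ is the corresponding probability. A distance graph in $\mathbb{R}^d$ is a finite graph $(V,E)$ with $V\subset\mathbb{R}^d$ finite and $E\subseteq\{\{\mathbf{x},\mathbf{y}\}\subseteq V: |\mathbf{x}-\mathbf{y}|=1\}$ (Euclidean norm). A graph is realizable in $\mathbb{R}^d$ as a distance graph if it is isomorphic to some distance graph in $\mathbb{R}^d$, i.e. its vertices can be mapped injectively to points of $\mathbb{R}^d$ so that every edge joins two points at Euclidean distance $1$. *)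

From Stdlib Require Import Reals List Arith Classical ClassicalEpsilon.
Open Scope R_scope.

(* Unordered pairs {i,j} of vertices of [n] = {0,...,n-1}, listed as (i,j) with i<j.
   Its length is n choose 2. *)
Definition vpairs (n : nat) : list (nat * nat) :=
  flat_map (fun j => map (fun i => (i, j)) (seq 0 j)) (seq 0 n).

Fixpoint bitlists (m : nat) : list (list bool) :=
  match m with
  | O => nil :: nil
  | S k => map (cons true) (bitlists k) ++ map (cons false) (bitlists k)
  end.

(* A labelled graph on [n] is encoded by a bit list b of length (n choose 2):
   the pair (vpairs n)_k is an edge iff b_k = true. *)
Definition adj (n : nat) (b : list bool) (i j : nat) : Prop :=
  In (((i, j) : nat * nat), true) (combine (vpairs n) b) \/ In (((j, i) : nat * nat), true) (combine (vpairs n) b).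

Definition graph_weight (p : R) (b : list bool) : R :=
  fold_right (fun (x : bool) (acc : R) => (if x then p else 1 - p) * acc) 1 b.

Definition dist2 (u v : R * R) : R :=
  sqrt ((fst u - fst v) ^ 2 + (snd u - snd v) ^ 2).

Definition realizable_R2 (n : nat) (E : nat -> nat -> Prop) : Prop :=
  exists f : nat -> R * R,
    (forall i j, (i < n)%nat -> (j < n)%nat -> i <> j -> f i <> f j) /\
    (forall i j, (i < n)%nat -> (j < n)%nat -> E i j -> dist2 (f i) (f j) = 1).

Definition indicator (P : Prop) : R :=
  if excluded_middle_informative P then 1 else 0.

Definition prob_realizable (n : nat) (p : R) : R :=
  fold_right Rplus 0
    (map (fun b => graph_weight p b * indicator (realizable_R2 n (adj n b)))
         (bitlists (length (vpairs n)))).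

(* A graph can be drawn in the plane with unit edges as soon as no component has more
   edges than vertices.  Indeed, a vertex with at most one neighbour is placed last, at a
   fresh point at distance 1 from that neighbour; if every vertex has degree at least two,
   a longest path has a chord at each end, and unless both ends share the same chord this
   gives a path with two chords.  Otherwise the path closes into a cycle which, by
   maximality and the absence of a second chord, is a whole component; it is drawn as a
   unit-distance polygon far away from the rest.
   A path with two chords on k vertices has k + 1 edges, and there are at most n^k k^4 of
   them, so in G(n, c/n) their expected number is at most (c/n) sum_k k^4 c^k = O(1/n). *)

From Stdlib Require Import Reals List Arith Lia Lra Classical ClassicalEpsilon.
Open Scope R_scope.

Definition lsum {A} (l : list A) (f : A -> R) : R := fold_right Rplus 0 (map f l).

Lemma lsum_cons {A} (x : A) l f : lsum (x :: l) f = f x + lsum l f.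
Proof. reflexivity. Qed.

Lemma lsum_app {A} (l1 l2 : list A) f : lsum (l1 ++ l2) f = lsum l1 f + lsum l2 f.
Proof. unfold lsum; induction l1; simpl; rewrite ?IHl1; lra. Qed.

Lemma lsum_map {A B} (g : A -> B) l f : lsum (map g l) f = lsum l (fun x => f (g x)).
Proof. unfold lsum; rewrite map_map; reflexivity. Qed.

Lemma lsum_plus {A} (l : list A) f g : lsum l (fun x => f x + g x) = lsum l f + lsum l g.
Proof. unfold lsum; induction l; simpl; rewrite ?IHl; lra. Qed.

Lemma lsum_scal {A} (l : list A) a f : lsum l (fun x => a * f x) = a * lsum l f.
Proof. unfold lsum; induction l; simpl; rewrite ?IHl; lra. Qed.

Lemma lsum_const {A} (l : list A) a : lsum l (fun _ => a) = INR (length l) * a.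
Proof. unfold lsum; induction l; simpl length; rewrite ?S_INR; simpl; rewrite ?IHl; lra. Qed.

Lemma lsum_ext {A} (l : list A) f g : (forall x, In x l -> f x = g x) -> lsum l f = lsum l g.
Proof. intros H; unfold lsum; f_equal; apply map_ext_in; exact H. Qed.

Lemma lsum_le {A} (l : list A) f g : (forall x, In x l -> f x <= g x) -> lsum l f <= lsum l g.
Proof.
  induction l as [|x l IH]; intros H; unfold lsum in *; simpl in *; [lra|].
  specialize (IH (fun y hy => H y (or_intror hy))); specialize (H x (or_introl eq_refl)); lra.
Qed.

Lemma lsum_nonneg {A} (l : list A) f : (forall x, In x l -> 0 <= f x) -> 0 <= lsum l f.
Proof.
  intros H; apply Rle_trans with (lsum l (fun _ => 0)).
  - rewrite lsum_const; lra.
  - apply lsum_le; exact H.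
Qed.

Lemma lsum_flat_map {A B} (g : A -> list B) l f :
  lsum (flat_map g l) f = lsum l (fun x => lsum (g x) f).
Proof. induction l; simpl; [reflexivity|]; rewrite lsum_app, lsum_cons, IHl; reflexivity. Qed.

Lemma lsum_exchange {A B} (l1 : list A) (l2 : list B) f :
  lsum l1 (fun x => lsum l2 (f x)) = lsum l2 (fun y => lsum l1 (fun x => f x y)).
Proof.
  induction l1 as [|x l1 IH].
  - symmetry; rewrite (lsum_ext _ _ (fun _ => 0)) by reflexivity.
    rewrite lsum_const, Rmult_0_r; reflexivity.
  - rewrite lsum_cons, IH, <- lsum_plus; apply lsum_ext; intros; reflexivity.
Qed.

Lemma lsum_seq f N : lsum (seq 0 (S N)) f = sum_f_R0 f N.
Proof.
  induction N; [unfold lsum; simpl; ring|].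
  rewrite seq_S, lsum_app, IHN; unfold lsum; simpl; ring.
Qed.

Lemma indicator_true (P : Prop) : P -> indicator P = 1.
Proof. unfold indicator; destruct excluded_middle_informative; tauto. Qed.

Lemma indicator_false (P : Prop) : ~ P -> indicator P = 0.
Proof. unfold indicator; destruct excluded_middle_informative; tauto. Qed.

Lemma indicator_bounds P : 0 <= indicator P <= 1.
Proof. unfold indicator; destruct excluded_middle_informative; lra. Qed.

Lemma indicator_le (P Q : Prop) : (P -> Q) -> indicator P <= indicator Q.
Proof.
  intros H; unfold indicator.
  do 2 destruct excluded_middle_informative; try lra; tauto.
Qed.

Lemma indicator_iff (P Q : Prop) : (P <-> Q) -> indicator P = indicator Q.
Proof. intros [H1 H2]; apply Rle_antisym; apply indicator_le; assumption. Qed.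

Lemma indicator_and (P Q : Prop) : indicator (P /\ Q) = indicator P * indicator Q.
Proof.
  destruct (classic P), (classic Q);
    rewrite ?(indicator_true P), ?(indicator_false P), ?(indicator_true Q), ?(indicator_false Q),
      ?indicator_true, ?indicator_false by tauto; ring.
Qed.

Lemma indicator_exists_le {A} (L : list A) (P : A -> Prop) :
  indicator (exists x, In x L /\ P x) <= lsum L (fun x => indicator (P x)).
Proof.
  induction L as [|a L IH].
  - rewrite indicator_false by (intros [x [[] _]]); unfold lsum; simpl; lra.
  - rewrite lsum_cons; destruct (classic (P a)) as [Ha|Ha].
    + pose proof (indicator_bounds (exists x, In x (a :: L) /\ P x)).
      assert (0 <= lsum L (fun x => indicator (P x)))
        by (apply lsum_nonneg; intros; apply indicator_bounds).
      rewrite (indicator_true (P a)) by exact Ha; lra.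
    + rewrite (indicator_false (P a)) by exact Ha.
      enough (indicator (exists x, In x (a :: L) /\ P x) <= indicator (exists x, In x L /\ P x))
        by lra.
      apply indicator_le; intros [x [[<-|hx] hp]]; [tauto | eauto].
Qed.

Lemma graph_weight_nonneg p b : 0 <= p <= 1 -> 0 <= graph_weight p b.
Proof. intros Hp; induction b as [|[] b]; simpl; try apply Rmult_le_pos; lra. Qed.

Lemma graph_weight_sum p m : lsum (bitlists m) (graph_weight p) = 1.
Proof.
  induction m; [unfold lsum; simpl; lra|].
  simpl; rewrite lsum_app, !lsum_map; simpl.
  rewrite (lsum_scal _ p (graph_weight p)), (lsum_scal _ (1 - p) (graph_weight p)), IHm; lra.
Qed.

Lemma prob_all_present {K} p (L : list K) (S : K -> bool) : NoDup L ->
  lsum (bitlists (length L)) (fun b => graph_weight p b *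
    indicator (forall s, In s L -> S s = true -> In (s, true) (combine L b)))
  = p ^ length (filter S L).
Proof.
  induction L as [|x L IH]; intros hL.
  - unfold lsum; simpl; rewrite indicator_true by (intros _ []); ring.
  - apply NoDup_cons_iff in hL as [hx hL].
    assert (event : forall y b,
      (forall s, In s (x :: L) -> S s = true -> In (s, true) (combine (x :: L) (y :: b))) <->
      (S x = true -> y = true) /\
      (forall s, In s L -> S s = true -> In (s, true) (combine L b))).
    { intros y b; simpl; split.
      - intros H; split.
        + intros hS; destruct (H x (or_introl eq_refl) hS) as [e|e];
            [congruence | apply in_combine_l in e; contradiction].
        + intros s hs hS; destruct (H s (or_intror hs) hS) as [e|e]; [|exact e].
          injection e as <- _; contradiction.
      - intros [H1 H2] s [<-|hs] hS; [left; rewrite H1 by exact hS; reflexivity|].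
        right; auto. }
    assert (split : forall y, lsum (bitlists (length L)) (fun b => graph_weight p (y :: b) *
        indicator (forall s, In s (x :: L) -> S s = true -> In (s, true) (combine (x :: L) (y :: b))))
      = (if y then p else 1 - p) * indicator (S x = true -> y = true) * p ^ length (filter S L)).
    { intros y; rewrite <- (IH hL), <- lsum_scal; apply lsum_ext; intros b _.
      rewrite (indicator_iff _ _ (event y b)), indicator_and; simpl; ring. }
    simpl length; simpl bitlists; rewrite lsum_app, !lsum_map, !split.
    destruct (S x) eqn:hS; simpl filter; simpl length.
    + rewrite (indicator_true (true = true -> true = true)) by auto.
      rewrite indicator_false by (intros H; discriminate (H eq_refl)); simpl; ring.
    + rewrite !indicator_true by discriminate; ring.
Qed.

Lemma In_vpairs n i j : In (i, j) (vpairs n) <-> (i < j < n)%nat.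
Proof.
  unfold vpairs; rewrite in_flat_map; split.
  - intros [x [Hx Hy]]; apply in_seq in Hx; apply in_map_iff in Hy.
    destruct Hy as [y [E Hy]]; injection E as -> ->; apply in_seq in Hy; lia.
  - intros H; exists j; split; [apply in_seq; lia|].
    apply in_map_iff; exists i; split; [reflexivity | apply in_seq; lia].
Qed.

Lemma NoDup_vpairs n : NoDup (vpairs n).
Proof.
  induction n; [constructor|].
  unfold vpairs in *; rewrite seq_S, flat_map_app; apply NoDup_app; auto.
  - simpl; rewrite app_nil_r; apply NoDup_map_NoDup_ForallPairs; [|apply seq_NoDup].
    intros x y _ _ E; injection E; auto.
  - intros [a b] H1 H2; apply in_flat_map in H1 as [x [Hx Hy]]; apply in_seq in Hx.
    apply in_map_iff in Hy as [y [E _]]; injection E as <- <-.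
    simpl in H2; rewrite app_nil_r in H2; apply in_map_iff in H2 as [z [E _]].
    injection E; lia.
Qed.

Lemma adj_sym n b i j : adj n b i j -> adj n b j i.
Proof. unfold adj; tauto. Qed.

Lemma adj_irrefl n b i : ~ adj n b i i.
Proof. intros [H|H]; apply in_combine_l, In_vpairs in H; lia. Qed.

Lemma adj_lt n b i j : adj n b i j -> (i < n /\ j < n)%nat.
Proof. intros [H|H]; apply in_combine_l, In_vpairs in H; lia. Qed.

Lemma adj_ordered n b i j : (i < j)%nat -> adj n b i j -> In ((i, j), true) (combine (vpairs n) b).
Proof. intros Hij [H|H]; [exact H|]; apply in_combine_l, In_vpairs in H; lia. Qed.

Lemma dist2_unit u v : (fst u - fst v) ^ 2 + (snd u - snd v) ^ 2 = 1 -> dist2 u v = 1.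
Proof. unfold dist2; intros ->; apply sqrt_1. Qed.

Lemma dist2_sym u v : dist2 u v = dist2 v u.
Proof. unfold dist2; f_equal; ring. Qed.

Lemma dist2_shift a b D : dist2 (fst a + D, snd a) (fst b + D, snd b) = dist2 a b.
Proof. unfold dist2; simpl; f_equal; ring. Qed.

Lemma exists_unit_avoiding (L : list R) : exists t, 0 < t <= 1 /\ ~ In t L.
Proof.
  set (T := map (fun k => / (INR k + 1)) (seq 0 (S (length L)))).
  assert (hT : ~ incl T L).
  { intros H; apply NoDup_incl_length in H.
    - unfold T in H; rewrite length_map, length_seq in H; lia.
    - apply NoDup_map_NoDup_ForallPairs; [|apply seq_NoDup].
      intros a c _ _ e; apply INR_eq; apply Rinv_eq_reg in e; lra. }
  apply not_all_ex_not in hT as [t ht]; apply imply_to_and in ht as [hin hnot].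
  exists t; split; [|exact hnot].
  apply in_map_iff in hin as [k [<- _]]; pose proof (pos_INR k).
  split; [apply Rinv_0_lt_compat; lra|].
  rewrite <- Rinv_1; apply Rinv_le_contravar; lra.
Qed.

Lemma exists_unit_neighbour (q : R * R) (L : list R) :
  exists P, dist2 P q = 1 /\ ~ In (fst P) L.
Proof.
  destruct (exists_unit_avoiding (map (fun y => y - fst q) L)) as [t [Ht HL]].
  exists (fst q + t, snd q + sqrt (1 - t ^ 2)); split.
  - apply dist2_unit; cbn [fst snd].
    replace (fst q + t - fst q) with t by ring.
    replace (snd q + sqrt (1 - t ^ 2) - snd q) with (sqrt (1 - t ^ 2)) by ring.
    rewrite pow2_sqrt by nra; ring.
  - simpl; intros H; apply HL, in_map_iff; exists (fst q + t); split; [ring | exact H].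
Qed.

(* A unit-distance [k]-gon: [k/2] points along y = 0 and back along y = -1; for odd [k]
   one more point (-sqrt 3/2, -1/2) at distance 1 from both (0,0) and (0,-1). *)
Definition unit_polygon (k j : nat) : R * R :=
  if (j <? Nat.div2 k)%nat then (INR j, 0)
  else if (j <? 2 * Nat.div2 k)%nat then (INR (2 * Nat.div2 k - 1 - j), -1)
  else (- sqrt 3 / 2, - / 2).

Lemma sqrt3_facts : sqrt 3 * sqrt 3 = 3 /\ 1 < sqrt 3 < 2.
Proof.
  assert (h : sqrt 3 * sqrt 3 = 3) by (apply sqrt_sqrt; lra).
  pose proof (sqrt_pos 3); split; [exact h | split; nra].
Qed.

Lemma div2_cases k : (2 * Nat.div2 k = k \/ 2 * Nat.div2 k + 1 = k)%nat.
Proof.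
  destruct (Nat.Even_or_Odd k) as [H|H].
  - left; rewrite (Nat.Even_double _ H) at 2; unfold Nat.double; lia.
  - right; rewrite (Nat.Odd_double _ H) at 2; unfold Nat.double; lia.
Qed.

Lemma unit_polygon_x_ge k j : -1 <= fst (unit_polygon k j).
Proof.
  pose proof sqrt3_facts; unfold unit_polygon.
  destruct (_ <? _)%nat; [|destruct (_ <? _)%nat]; cbn [fst]; try lra; apply Rle_trans with 0;
    try lra; apply pos_INR.
Qed.

Lemma unit_polygon_step k j : (3 <= k)%nat -> (j + 1 < k)%nat ->
  dist2 (unit_polygon k j) (unit_polygon k (j + 1)) = 1.
Proof.
  intros Hk Hj; apply dist2_unit; pose proof (div2_cases k) as Hm; pose proof sqrt3_facts as [h3 _].
  unfold unit_polygon; set (m := Nat.div2 k) in *.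
  destruct (Nat.ltb_spec j m), (Nat.ltb_spec (j + 1) m); try lia;
    try destruct (Nat.ltb_spec j (2 * m)); try destruct (Nat.ltb_spec (j + 1) (2 * m)); try lia;
    cbn [fst snd].
  - rewrite plus_INR, INR_1; ring.
  - replace (2 * m - 1 - (j + 1))%nat with j by lia; ring.
  - replace (2 * m - 1 - j)%nat with (S (2 * m - 1 - (j + 1))) by lia; rewrite S_INR; ring.
  - replace (2 * m - 1 - j)%nat with 0%nat by lia; rewrite INR_0.
    transitivity (sqrt 3 * sqrt 3 / 4 + / 4); [field | rewrite h3; field].
Qed.

Lemma unit_polygon_close k : (3 <= k)%nat -> dist2 (unit_polygon k (k - 1)) (unit_polygon k 0) = 1.
Proof.
  intros Hk; apply dist2_unit; pose proof (div2_cases k) as Hm; pose proof sqrt3_facts as [h3 _].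
  unfold unit_polygon; set (m := Nat.div2 k) in *.
  destruct (Nat.ltb_spec (k - 1) m), (Nat.ltb_spec 0 m); try lia;
    destruct (Nat.ltb_spec (k - 1) (2 * m)); cbn [fst snd].
  - replace (2 * m - 1 - (k - 1))%nat with 0%nat by lia; rewrite INR_0; ring.
  - rewrite INR_0; transitivity (sqrt 3 * sqrt 3 / 4 + / 4); [field | rewrite h3; field].
Qed.

Lemma unit_polygon_inj k i j : (i < k)%nat -> (j < k)%nat -> i <> j ->
  unit_polygon k i <> unit_polygon k j.
Proof.
  intros Hi Hj Hij E; pose proof (div2_cases k); unfold unit_polygon in E.
  set (m := Nat.div2 k) in *.
  destruct (Nat.ltb_spec i m), (Nat.ltb_spec j m);
    try destruct (Nat.ltb_spec i (2 * m)); try destruct (Nat.ltb_spec j (2 * m));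
    try (injection E; intros); try lra; try lia;
    match goal with H : INR _ = INR _ |- _ => apply INR_eq in H; lia end.
Qed.

Lemma exists_max_nat (P : nat -> Prop) (B : nat) :
  (exists k, P k) -> (forall k, P k -> (k <= B)%nat) -> exists k, P k /\ forall k', P k' -> (k' <= k)%nat.
Proof.
  intros [k0 Hk0] HB; remember (B - k0)%nat as d eqn:Hd; revert k0 Hk0 Hd.
  induction d as [d IH] using (well_founded_induction lt_wf); intros k0 Hk0 Hd.
  destruct (classic (exists k', P k' /\ (k0 < k')%nat)) as [[k' [H1 H2]]|H].
  - specialize (HB _ H1); apply (IH (B - k')%nat) with k'; auto; lia.
  - exists k0; split; [exact Hk0|]; intros k' Hk'.
    apply Nat.nlt_ge; intros hlt; apply H; eauto.
Qed.

Lemma exists_upper_bound (L : list R) : exists M, forall x, In x L -> x <= M.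
Proof.
  induction L as [|a L [M HM]]; [exists 0; intros _ []|].
  exists (Rmax a M); intros x [<-|hx]; [apply Rmax_l | eapply Rle_trans; [apply HM, hx | apply Rmax_r]].
Qed.

Lemma nth_map_seq {A} (f : nat -> A) k t d : (t < k)%nat -> nth t (map f (seq 0 k)) d = f t.
Proof.
  intros H; rewrite nth_indep with (d' := f 0%nat) by (rewrite length_map, length_seq; exact H).
  rewrite map_nth, seq_nth; auto.
Qed.

Definition nthv (l : list nat) (i : nat) : nat := nth i l 0%nat.

Lemma nthv_inj l i j : NoDup l -> (i < length l)%nat -> (j < length l)%nat ->
  nthv l i = nthv l j -> i = j.
Proof. intros hd; apply (proj1 (NoDup_nth l 0%nat) hd). Qed.

Fixpoint position (x : nat) (l : list nat) : nat :=
  match l with nil => O | y :: l' => if Nat.eqb x y then O else S (position x l') end.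

Lemma position_spec x l : In x l -> (position x l < length l)%nat /\ nthv l (position x l) = x.
Proof.
  induction l as [|y l IH]; simpl; intros H; [contradiction|].
  destruct (Nat.eqb_spec x y) as [->|hne]; [split; [lia | reflexivity]|].
  destruct H as [H|H]; [congruence|]; destruct (IH H); split; [lia | assumption].
Qed.

Definition vdiff (V l : list nat) : list nat :=
  filter (fun x => if in_dec Nat.eq_dec x l then false else true) V.

Lemma In_vdiff V l x : In x (vdiff V l) <-> In x V /\ ~ In x l.
Proof.
  unfold vdiff; rewrite filter_In; destruct (in_dec Nat.eq_dec x l); intuition discriminate.
Qed.

Lemma vdiff_length_lt V l x : In x V -> In x l -> (length (vdiff V l) < length V)%nat.
Proof.
  intros hV hl; pose proof (filter_length_le
    (fun x => if in_dec Nat.eq_dec x l then false else true) V) as Hle.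
  apply Nat.le_neq; split; [exact Hle|]; intros e.
  apply filter_length_forallb in e; rewrite forallb_forall in e.
  specialize (e x hV); destruct (in_dec Nat.eq_dec x l); [discriminate | contradiction].
Qed.

Definition path_edges (E : nat -> nat -> Prop) (l : list nat) : Prop :=
  forall i, (S i < length l)%nat -> E (nthv l i) (nthv l (S i)).

Definition is_path (E : nat -> nat -> Prop) (V l : list nat) : Prop :=
  NoDup l /\ incl l V /\ path_edges E l.

Definition longest_path (E : nat -> nat -> Prop) (V l : list nat) : Prop :=
  is_path E V l /\ forall l', is_path E V l' -> (length l' <= length l)%nat.

Definition chord_ok (k : nat) (c : nat * nat) : Prop := (fst c + 2 <= snd c < k)%nat.

Definition chord_edge (E : nat -> nat -> Prop) (l : list nat) (c : nat * nat) : Prop :=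
  E (nthv l (fst c)) (nthv l (snd c)).

(* A connected subgraph with one more edge than vertices; in G(n, c/n) such
   configurations appear with probability O(1/n). *)
Definition two_chord_path (E : nat -> nat -> Prop) (l : list nat) (c1 c2 : nat * nat) : Prop :=
  NoDup l /\ path_edges E l /\ chord_ok (length l) c1 /\ chord_ok (length l) c2 /\ c1 <> c2 /\
  chord_edge E l c1 /\ chord_edge E l c2.

Definition cycle_adjacent (k i j : nat) : Prop :=
  j = S i \/ i = S j \/ (i = 0 /\ j = k - 1)%nat \/ (i = k - 1 /\ j = 0)%nat.

Definition at_most_one_neighbour (E : nat -> nat -> Prop) (V : list nat) (v : nat) : Prop :=
  forall u w, In u V -> In w V -> E v u -> E v w -> u = w.

Definition min_degree_two (E : nat -> nat -> Prop) (V : list nat) : Prop :=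
  forall v, In v V -> exists u w, In u V /\ In w V /\ E v u /\ E v w /\ u <> w.

Definition realizable_on (E : nat -> nat -> Prop) (V : list nat) : Prop :=
  exists f : nat -> R * R, (forall i j, In i V -> In j V -> i <> j -> f i <> f j) /\
    (forall i j, In i V -> In j V -> E i j -> dist2 (f i) (f j) = 1).

Section Realization.

Variable E : nat -> nat -> Prop.
Hypothesis E_sym : forall a b, E a b -> E b a.
Hypothesis E_irrefl : forall a, ~ E a a.

Lemma realizable_on_remove_leaf V v : In v V -> at_most_one_neighbour E V v ->
  realizable_on E (remove Nat.eq_dec v V) -> realizable_on E V.
Proof.
  intros hv huniq [f [finj fedge]].
  set (V' := remove Nat.eq_dec v V) in *.
  assert (hV' : forall x, In x V -> x <> v -> In x V') by (intros; apply in_in_remove; auto).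
  assert (Hq : exists q, forall u, In u V -> E v u -> f u = q).
  { destruct (classic (exists u, In u V /\ E v u)) as [[u [hu he]]|hno].
    - exists (f u); intros u' hu' he'; rewrite (huniq u' u); auto.
    - exists (0, 0); intros u hu he; exfalso; eauto. }
  destruct Hq as [q Hq].
  destruct (exists_unit_neighbour q (map (fun w => fst (f w)) V')) as [P [hP1 hP2]].
  assert (fresh : forall w, In w V -> w <> v -> P <> f w).
  { intros w hw hne e; apply hP2, in_map_iff; exists w; split; [rewrite e | apply hV']; auto. }
  exists (fun x => if Nat.eq_dec x v then P else f x); split.
  - intros i j hi hj hij; destruct (Nat.eq_dec i v), (Nat.eq_dec j v).
    + congruence.
    + apply fresh; assumption.
    + apply not_eq_sym, fresh; assumption.
    + apply finj; auto.
  - intros i j hi hj he; destruct (Nat.eq_dec i v) as [->|ni], (Nat.eq_dec j v) as [->|nj].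
    + exfalso; eapply E_irrefl; eauto.
    + rewrite (Hq j); auto.
    + rewrite dist2_sym, (Hq i); auto.
    + apply fedge; auto.
Qed.

Lemma realizable_on_cycle l : (3 <= length l)%nat ->
  (forall i j, (i < length l)%nat -> (j < length l)%nat -> E (nthv l i) (nthv l j) ->
     cycle_adjacent (length l) i j) ->
  realizable_on E l.
Proof.
  intros hk cycle_edges; set (k := length l) in *.
  exists (fun x => unit_polygon k (position x l)); split; intros x y hx hy;
    destruct (position_spec _ _ hx) as [px ex], (position_spec _ _ hy) as [py ey].
  - intros hxy; apply unit_polygon_inj; auto; intros e; apply hxy; rewrite <- ex, <- ey, e; reflexivity.
  - intros he; rewrite <- ex, <- ey in he.
    destruct (cycle_edges _ _ px py he) as [c|[c|[[c1 c2]|[c1 c2]]]]; rewrite ?c, ?c1, ?c2.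
    + rewrite <- Nat.add_1_r; apply unit_polygon_step; lia.
    + rewrite dist2_sym, <- Nat.add_1_r; apply unit_polygon_step; lia.
    + rewrite dist2_sym; apply unit_polygon_close; lia.
    + apply unit_polygon_close; lia.
Qed.

Lemma realizable_on_glue V l : (forall x y, In x l -> In y V -> E x y -> In y l) ->
  realizable_on E l -> realizable_on E (vdiff V l) -> realizable_on E V.
Proof.
  intros closed_nbhd [g [ginj gedge]] [f [finj fedge]].
  destruct (exists_upper_bound (map (fun w => fst (f w)) (vdiff V l))) as [M1 HM1].
  destruct (exists_upper_bound (map (fun w => - fst (g w)) l)) as [M2 HM2].
  (* shift the drawing of [l] to the right of every point placed by [f] *)
  set (D := M1 + M2 + 1).
  set (h := fun x => if in_dec Nat.eq_dec x l then (fst (g x) + D, snd (g x)) else f x).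
  assert (h_in : forall x, In x l -> h x = (fst (g x) + D, snd (g x)))
    by (intros x hx; unfold h; destruct (in_dec Nat.eq_dec x l); tauto).
  assert (h_out : forall x, ~ In x l -> h x = f x)
    by (intros x hx; unfold h; destruct (in_dec Nat.eq_dec x l); tauto).
  assert (far : forall x y, In x l -> In y V -> ~ In y l -> h x <> f y).
  { intros x y hx hy hyl e; rewrite h_in in e by exact hx.
    assert (fst (f y) <= M1) by (apply HM1, in_map_iff; exists y; split; [|apply In_vdiff]; auto).
    assert (- fst (g x) <= M2) by (apply HM2, in_map_iff; exists x; split; auto).
    rewrite <- e in H; simpl in H; unfold D in H; lra. }
  exists h; split; intros i j hi hj;
    destruct (in_dec Nat.eq_dec i l) as [il|il], (in_dec Nat.eq_dec j l) as [jl|jl].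
  - rewrite h_in, h_in by assumption; intros hij e; injection e as e1 e2.
    apply (ginj i j il jl hij), injective_projections; lra.
  - rewrite (h_out j) by exact jl; intros _; apply far; auto.
  - rewrite (h_out i) by exact il; intros _; apply not_eq_sym, far; auto.
  - rewrite h_out, h_out by assumption; apply finj; apply In_vdiff; auto.
  - rewrite h_in, h_in, dist2_shift by assumption; apply gedge; auto.
  - intros he; exfalso; eauto.
  - intros he; exfalso; eauto.
  - rewrite h_out, h_out by assumption; apply fedge; apply In_vdiff; auto.
Qed.

Lemma path_cons V l x : is_path E V l -> In x V -> ~ In x l -> (0 < length l)%nat ->
  E x (nthv l 0) -> is_path E V (x :: l).
Proof.
  intros [hd [hV hp]] hx hxl hl he; split; [|split].
  - constructor; assumption.
  - intros y [<-|hy]; auto.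
  - intros [|i] hi; [exact he | apply hp; simpl in hi; lia].
Qed.

Lemma path_rev V l : is_path E V l -> is_path E V (rev l).
Proof.
  intros [hd [hV hp]]; split; [|split].
  - apply NoDup_rev, hd.
  - intros y hy; apply hV, in_rev, hy.
  - intros i hi; rewrite length_rev in hi; unfold nthv; rewrite !rev_nth by lia.
    apply E_sym; replace (length l - S i)%nat with (S (length l - S (S i))) by lia.
    apply hp; lia.
Qed.

Lemma longest_path_rev V l : longest_path E V l -> longest_path E V (rev l).
Proof.
  intros [hp hmax]; split; [apply path_rev, hp|].
  rewrite length_rev; exact hmax.
Qed.

(* Walk the cycle backwards from [l_i], so that a neighbour [x] of [l_i] can be prepended. *)
Definition rotate_index (i k j : nat) : nat := if (j <=? i)%nat then (i - j)%nat else (i + k - j)%nat.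

Lemma path_rotate V l i x : is_path E V l -> (3 <= length l)%nat ->
  E (nthv l 0) (nthv l (length l - 1)) -> (i < length l)%nat ->
  In x V -> ~ In x l -> E (nthv l i) x ->
  is_path E V (x :: map (fun j => nthv l (rotate_index i (length l) j)) (seq 0 (length l))).
Proof.
  intros [hd [hV hp]] hk hc hi hx hxl he; set (k := length l) in *.
  assert (Hg : forall j, (j < k)%nat -> (rotate_index i k j < k)%nat)
    by (intros j hj; unfold rotate_index; destruct (Nat.leb_spec j i); lia).
  assert (nth_rot : forall t, (t < k)%nat ->
    nthv (map (fun j => nthv l (rotate_index i k j)) (seq 0 k)) t = nthv l (rotate_index i k t)).
  { intros t ht; exact (nth_map_seq (fun j => nthv l (rotate_index i k j)) k t 0%nat ht). }
  split; [|split].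
  - constructor.
    + intros H; apply in_map_iff in H as [j [<- hj]]; apply in_seq in hj.
      apply hxl, nth_In, Hg; lia.
    + apply NoDup_map_NoDup_ForallPairs; [|apply seq_NoDup].
      intros a b ha hb e; apply in_seq in ha; apply in_seq in hb.
      apply nthv_inj in e; try (apply Hg; lia); [|exact hd].
      unfold rotate_index in e; destruct (Nat.leb_spec a i), (Nat.leb_spec b i); lia.
  - intros y [<-|hy]; [exact hx|].
    apply in_map_iff in hy as [j [<- hj]]; apply in_seq in hj; apply hV, nth_In, Hg; lia.
  - intros [|t] ht; simpl in ht; rewrite length_map, length_seq in ht.
    + change (E x (nthv (map (fun j => nthv l (rotate_index i k j)) (seq 0 k)) 0)).
      rewrite nth_rot by lia; unfold rotate_index; simpl; rewrite Nat.sub_0_r; auto.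
    + change (E (nthv (map (fun j => nthv l (rotate_index i k j)) (seq 0 k)) t)
                (nthv (map (fun j => nthv l (rotate_index i k j)) (seq 0 k)) (S t))).
      rewrite !nth_rot by lia; unfold rotate_index.
      destruct (Nat.leb_spec t i), (Nat.leb_spec (S t) i); try lia.
      * apply E_sym; replace (i - t)%nat with (S (i - S t)) by lia; apply hp; lia.
      * replace (i - t)%nat with 0%nat by lia; replace (i + k - S t)%nat with (k - 1)%nat by lia.
        exact hc.
      * apply E_sym; replace (i + k - t)%nat with (S (i + k - S t)) by lia; apply hp; lia.
Qed.

Lemma exists_longest_path V v : In v V -> exists l, longest_path E V l /\ (1 <= length l)%nat.
Proof.
  intros hv.
  assert (single : is_path E V (v :: nil)).
  { split; [|split]; [repeat constructor; intros [] | intros y [<-|[]]; exact hv | intros i hi; simpl in hi; lia]. }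
  destruct (exists_max_nat (fun k => exists l, is_path E V l /\ length l = k) (length V))
    as [k [[l [hp <-]] hmax]].
  - exists 1%nat, (v :: nil); auto.
  - intros k [l [[hd [hi _]] <-]]; apply NoDup_incl_length; assumption.
  - exists l; split; [split; [exact hp | intros l' hp'; apply hmax; eauto]|].
    apply (hmax 1%nat); exists (v :: nil); auto.
Qed.

Lemma longest_path_front_closed V l x : longest_path E V l -> (0 < length l)%nat ->
  In x V -> E (nthv l 0) x -> In x l.
Proof.
  intros [hp hmax] hl hx he; apply NNPP; intros hn.
  specialize (hmax (x :: l) (path_cons V l x hp hx hn hl (E_sym _ _ he))); simpl in hmax; lia.
Qed.

Lemma longest_path_front_chord V l : min_degree_two E V -> longest_path E V l -> (0 < length l)%nat ->
  exists a, (2 <= a < length l)%nat /\ E (nthv l 0) (nthv l a).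
Proof.
  intros hdeg hl hpos; pose proof hl as [[hd [hlV _]] _].
  destruct (hdeg (nthv l 0) (hlV _ (nth_In _ _ hpos))) as [u [w [hu [hw [e1 [e2 hne]]]]]].
  destruct (In_nth l u 0%nat (longest_path_front_closed V l u hl hpos hu e1)) as [i [hi <-]].
  destruct (In_nth l w 0%nat (longest_path_front_closed V l w hl hpos hw e2)) as [j [hj <-]].
  assert (i <> 0%nat) by (intros ->; eapply E_irrefl; eauto).
  assert (j <> 0%nat) by (intros ->; eapply E_irrefl; eauto).
  assert (i <> j) by (intros ->; auto).
  destruct (Nat.le_gt_cases 2 i); [exists i | exists j]; split; auto; lia.
Qed.

Lemma longest_path_back_chord V l : min_degree_two E V -> longest_path E V l -> (0 < length l)%nat ->
  exists b, (b + 2 <= length l - 1)%nat /\ E (nthv l b) (nthv l (length l - 1)).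
Proof.
  intros hdeg hl hpos.
  destruct (longest_path_front_chord V (rev l) hdeg (longest_path_rev V l hl))
    as [a [ha he]]; rewrite length_rev in *; [lia|].
  unfold nthv in he; rewrite !rev_nth in he by lia.
  exists (length l - S a)%nat; split; [lia|]; apply E_sym.
  exact he.
Qed.

Lemma closed_longest_path_nbhd V l : longest_path E V l -> (3 <= length l)%nat ->
  E (nthv l 0) (nthv l (length l - 1)) -> forall x y, In x l -> In y V -> E x y -> In y l.
Proof.
  intros [hp hmax] hk hc x y hx hy he; apply NNPP; intros hn.
  destruct (In_nth l x 0%nat hx) as [i [hi <-]].
  specialize (hmax _ (path_rotate V l i y hp hk hc hi hy hn he)).
  simpl in hmax; rewrite length_map, length_seq in hmax; lia.
Qed.

Hypothesis no_two_chord_path : forall l c1 c2, ~ two_chord_path E l c1 c2.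

Lemma closed_path_cycle_adjacent l : NoDup l -> path_edges E l -> (3 <= length l)%nat ->
  E (nthv l 0) (nthv l (length l - 1)) ->
  forall i j, (i < length l)%nat -> (j < length l)%nat -> E (nthv l i) (nthv l j) ->
    cycle_adjacent (length l) i j.
Proof.
  intros hd hp hk hc i j hi hj he; apply NNPP; intros hno; unfold cycle_adjacent in hno.
  assert (i <> j) by (intros ->; eapply E_irrefl; eauto).
  assert (hij : (i < j \/ j < i)%nat) by lia; destruct hij as [hij|hij].
  - apply (no_two_chord_path l (0, length l - 1)%nat (i, j)); repeat split; auto;
      unfold chord_ok; simpl; try lia.
    intros e; injection e as <- <-; apply hno; auto.
  - apply (no_two_chord_path l (0, length l - 1)%nat (j, i)); repeat split; auto;
      unfold chord_edge, chord_ok; simpl; try lia.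
    + intros e; injection e as <- <-; apply hno; auto.
    + apply E_sym, he.
Qed.

Theorem realizable_on_of_no_two_chord_path V : realizable_on E V.
Proof.
  remember (length V) as m eqn:Hm; revert V Hm.
  induction m as [m IH] using (well_founded_induction lt_wf); intros V ->.
  destruct (classic (exists v, In v V /\ at_most_one_neighbour E V v)) as [[v [hv hleaf]]|hno_leaf].
  { apply (realizable_on_remove_leaf V v hv hleaf).
    exact (IH _ (remove_length_lt Nat.eq_dec V v hv) _ eq_refl). }
  destruct V as [|v0 V0]; [exists (fun _ => (0, 0)); split; intros i j []|].
  assert (hdeg : min_degree_two E (v0 :: V0)).
  { intros v hv; apply NNPP; intros H; apply hno_leaf; exists v; split; [exact hv|].
    intros u w hu hw h1 h2; apply NNPP; intros hne; apply H; exists u, w; auto. }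
  destruct (exists_longest_path (v0 :: V0) v0 (or_introl eq_refl)) as [l [hl hpos]].
  destruct (longest_path_front_chord _ l hdeg hl hpos) as [a [ha ea]].
  destruct (longest_path_back_chord _ l hdeg hl hpos) as [b [hb eb]].
  pose proof hl as [[hd [hlV hp]] _].
  destruct (classic ((0, a) = (b, length l - 1))%nat) as [e|ne].
  2: { exfalso; apply (no_two_chord_path l (0, a)%nat (b, length l - 1)%nat);
       repeat split; auto; unfold chord_ok; simpl; lia. }
  injection e as <- ->.
  assert (hk : (3 <= length l)%nat) by lia.
  assert (hl0 : In (nthv l 0) l) by (apply nth_In; lia).
  apply (realizable_on_glue _ l).
  - apply (closed_longest_path_nbhd _ l); assumption.
  - apply realizable_on_cycle; [exact hk|]; apply closed_path_cycle_adjacent; assumption.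
  - exact (IH _ (vdiff_length_lt _ l _ (hlV _ hl0) hl0) _ eq_refl).
Qed.

End Realization.

Lemma realizable_R2_of_no_two_chord_path n b :
  (forall l c1 c2, ~ two_chord_path (adj n b) l c1 c2) -> realizable_R2 n (adj n b).
Proof.
  intros H; destruct (realizable_on_of_no_two_chord_path (adj n b) (adj_sym n b) (adj_irrefl n b) H
    (seq 0 n)) as [f [finj fedge]].
  exists f; split; intros i j hi hj; [apply finj | apply fedge]; apply in_seq; lia.
Qed.

Definition sort_pair (u w : nat) : nat * nat := if (u <? w)%nat then (u, w) else (w, u).

Lemma sort_pair_inj u w u' w' : sort_pair u w = sort_pair u' w' ->
  (u = u' /\ w = w') \/ (u = w' /\ w = u').
Proof.
  unfold sort_pair; destruct (Nat.ltb_spec u w), (Nat.ltb_spec u' w'); intros e;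
    injection e; intros; subst; auto.
Qed.

Definition index_edges (k : nat) (c1 c2 : nat * nat) : list (nat * nat) :=
  map (fun i => (i, S i)) (seq 0 (k - 1)) ++ c1 :: c2 :: nil.

Definition template_edges (l : list nat) (c1 c2 : nat * nat) : list (nat * nat) :=
  map (fun ij => sort_pair (nthv l (fst ij)) (nthv l (snd ij))) (index_edges (length l) c1 c2).

Lemma index_edges_lt k c1 c2 ij : chord_ok k c1 -> chord_ok k c2 ->
  In ij (index_edges k c1 c2) -> (fst ij < snd ij < k)%nat.
Proof.
  unfold chord_ok, index_edges; intros h1 h2 H; apply in_app_or in H.
  destruct H as [H|[<-|[<-|[]]]]; try lia.
  apply in_map_iff in H as [i [<- hi]]; apply in_seq in hi; simpl; lia.
Qed.

Lemma index_edges_NoDup k c1 c2 : chord_ok k c1 -> chord_ok k c2 -> c1 <> c2 ->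
  NoDup (index_edges k c1 c2).
Proof.
  unfold chord_ok, index_edges; intros h1 h2 h3; apply NoDup_app.
  - apply NoDup_map_NoDup_ForallPairs; [|apply seq_NoDup]; intros x y _ _ e; injection e; auto.
  - repeat constructor; simpl; intuition.
  - intros [x y] H1 H2; apply in_map_iff in H1 as [i [e _]]; injection e as <- <-.
    destruct H2 as [e|[e|[]]]; subst; simpl in *; lia.
Qed.

Lemma template_edges_length l c1 c2 : (1 <= length l)%nat ->
  length (template_edges l c1 c2) = S (length l).
Proof.
  intros h; unfold template_edges, index_edges.
  rewrite length_map, length_app, length_map, length_seq; simpl; lia.
Qed.

Lemma two_chord_path_index_edges E l c1 c2 : two_chord_path E l c1 c2 ->
  forall ij, In ij (index_edges (length l) c1 c2) -> E (nthv l (fst ij)) (nthv l (snd ij)).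
Proof.
  intros [_ [hp [h1 [h2 [_ [e1 e2]]]]]] ij H; apply in_app_or in H.
  destruct H as [H|[<-|[<-|[]]]]; auto.
  apply in_map_iff in H as [i [<- hi]]; apply in_seq in hi; apply hp; simpl; lia.
Qed.

Lemma template_edges_NoDup E l c1 c2 : two_chord_path E l c1 c2 -> NoDup (template_edges l c1 c2).
Proof.
  intros [hd [_ [h1 [h2 [h3 _]]]]]; unfold template_edges.
  apply NoDup_map_NoDup_ForallPairs; [|apply index_edges_NoDup; auto].
  intros [i j] [i' j'] hx hy e; apply index_edges_lt in hx, hy; auto; simpl in *.
  apply sort_pair_inj in e as [[e1 e2]|[e1 e2]]; apply nthv_inj in e1, e2; auto; try lia.
Qed.

Lemma template_edges_present n b l c1 c2 : two_chord_path (adj n b) l c1 c2 ->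
  forall e, In e (template_edges l c1 c2) -> In (e, true) (combine (vpairs n) b).
Proof.
  intros ht e he; pose proof ht as [hd [_ [h1 [h2 _]]]].
  apply in_map_iff in he as [ij [<- hij]].
  pose proof (two_chord_path_index_edges _ _ _ _ ht ij hij) as hadj.
  apply index_edges_lt in hij; auto.
  assert (hne : nthv l (fst ij) <> nthv l (snd ij)) by (intros e; apply nthv_inj in e; auto; lia).
  unfold sort_pair; destruct (Nat.ltb_spec (nthv l (fst ij)) (nthv l (snd ij)));
    apply adj_ordered; [lia | exact hadj | lia | apply adj_sym, hadj].
Qed.

Lemma two_chord_path_vertices_lt n b l c1 c2 : two_chord_path (adj n b) l c1 c2 ->
  forall x, In x l -> (x < n)%nat.
Proof.
  intros ht x hx; pose proof ht as [_ [hp [h1 _]]]; unfold chord_ok in h1.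
  destruct (In_nth l x 0%nat hx) as [i [hi <-]].
  destruct (Nat.lt_ge_cases (S i) (length l)).
  - exact (proj1 (adj_lt _ _ _ _ (hp i H))).
  - replace i with (S (i - 1)) by lia; apply (adj_lt n b (nthv l (i - 1))), hp; lia.
Qed.

Lemma pow_le_pow_of_le p a b : 0 <= p <= 1 -> (b <= a)%nat -> p ^ a <= p ^ b.
Proof.
  intros hp hab; replace a with (b + (a - b))%nat by lia; rewrite pow_add.
  assert (0 <= p ^ (a - b) <= 1) by (split; [apply pow_le; lra | rewrite <- (pow1 (a - b)); apply pow_incr; lra]).
  assert (0 <= p ^ b) by (apply pow_le; lra); nra.
Qed.

Definition pair_eq_dec : forall x y : nat * nat, {x = y} + {x <> y}.
Proof. decide equality; apply Nat.eq_dec. Defined.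

Lemma prob_two_chord_path_le n p l c1 c2 : 0 <= p <= 1 ->
  lsum (bitlists (length (vpairs n)))
    (fun b => graph_weight p b * indicator (two_chord_path (adj n b) l c1 c2))
  <= p ^ S (length l).
Proof.
  intros hp; destruct (classic (exists b, two_chord_path (adj n b) l c1 c2)) as [[b0 ht]|hno].
  2: { rewrite (lsum_ext _ _ (fun _ => 0)), lsum_const by
         (intros b _; rewrite indicator_false by eauto; ring).
       rewrite Rmult_0_r; apply pow_le; lra. }
  set (Ed := template_edges l c1 c2).
  set (S := fun e => if in_dec pair_eq_dec e Ed then true else false).
  apply Rle_trans with (lsum (bitlists (length (vpairs n))) (fun b => graph_weight p b *
    indicator (forall e, In e (vpairs n) -> S e = true -> In (e, true) (combine (vpairs n) b)))).
  - apply lsum_le; intros b _; apply Rmult_le_compat_l; [apply graph_weight_nonneg, hp|].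
    apply indicator_le; intros ht' e _ hS; unfold S in hS.
    destruct (in_dec _ e Ed) as [he|]; [|discriminate].
    apply (template_edges_present n b l c1 c2 ht' e he).
  - rewrite prob_all_present by apply NoDup_vpairs.
    apply pow_le_pow_of_le; [exact hp|].
    pose proof ht as [_ [_ [[h1 h2] _]]].
    rewrite <- (template_edges_length l c1 c2) by lia; fold Ed.
    apply NoDup_incl_length; [apply (template_edges_NoDup _ _ _ _ ht)|].
    intros e he; apply filter_In; split.
    + eapply in_combine_l, template_edges_present; eauto.
    + unfold S; destruct (in_dec _ e Ed); tauto.
Qed.

Fixpoint tuples (n k : nat) : list (list nat) :=
  match k with
  | O => nil :: nil
  | S k' => flat_map (fun x => map (cons x) (tuples n k')) (seq 0 n)
  end.

Definition index_pairs (k : nat) : list (nat * nat) := list_prod (seq 0 k) (seq 0 k).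

Definition templates (n : nat) : list (list nat * ((nat * nat) * (nat * nat))) :=
  flat_map (fun k => list_prod (tuples n k) (list_prod (index_pairs k) (index_pairs k))) (seq 0 (S n)).

Lemma In_tuples n l : (forall y, In y l -> (y < n)%nat) -> In l (tuples n (length l)).
Proof.
  induction l as [|x l IH]; simpl; intros H; [left; reflexivity|].
  apply in_flat_map; exists x; split; [apply in_seq; specialize (H x (or_introl eq_refl)); lia|].
  apply in_map, IH; auto.
Qed.

Lemma tuples_length_elem n k l : In l (tuples n k) -> length l = k.
Proof.
  revert l; induction k; simpl; intros l H; [destruct H as [<-|[]]; reflexivity|].
  apply in_flat_map in H as [x [_ H]]; apply in_map_iff in H as [l' [<- H]]; simpl; f_equal; auto.
Qed.

Lemma tuples_length n k : length (tuples n k) = (n ^ k)%nat.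
Proof.
  induction k; simpl; [reflexivity|].
  assert (H : forall L : list nat,
    length (flat_map (fun x => map (cons x) (tuples n k)) L) = (length L * n ^ k)%nat).
  { induction L; simpl; [reflexivity|]; rewrite length_app, length_map, IHk, IHL; reflexivity. }
  rewrite H, length_seq; reflexivity.
Qed.

Lemma two_chord_path_In_templates n b l c1 c2 : two_chord_path (adj n b) l c1 c2 ->
  In (l, (c1, c2)) (templates n).
Proof.
  intros ht; pose proof ht as [hd [_ [h1 [h2 _]]]]; unfold chord_ok in h1, h2.
  pose proof (two_chord_path_vertices_lt n b l c1 c2 ht) as hb.
  apply in_flat_map; exists (length l); split.
  - apply in_seq; enough (length l <= length (seq 0 n))%nat by (rewrite length_seq in *; lia).
    apply NoDup_incl_length; [exact hd|]; intros y hy; apply in_seq; specialize (hb y hy); lia.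
  - destruct c1, c2; simpl in *; apply in_prod; [apply In_tuples, hb|].
    unfold index_pairs; repeat apply in_prod; apply in_seq; lia.
Qed.

Lemma lsum_templates n (f : nat -> R) :
  lsum (templates n) (fun t => f (length (fst t)))
  = lsum (seq 0 (S n)) (fun k => INR n ^ k * INR k ^ 4 * f k).
Proof.
  unfold templates; rewrite lsum_flat_map; apply lsum_ext; intros k _.
  rewrite (lsum_ext _ _ (fun _ => f k)).
  - rewrite lsum_const, !length_prod, tuples_length; unfold index_pairs.
    rewrite !length_prod, !length_seq, !mult_INR, pow_INR; ring.
  - intros [l q] H; apply in_prod_iff in H as [H _]; simpl; rewrite (tuples_length_elem n k l H); reflexivity.
Qed.

Lemma prob_not_realizable_le n p : 0 <= p <= 1 ->
  1 - prob_realizable n p <= lsum (seq 0 (S n)) (fun k => INR n ^ k * INR k ^ 4 * p ^ S k).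
Proof.
  intros hp; set (B := bitlists (length (vpairs n))).
  set (ev := fun b t => two_chord_path (adj n b) (fst t) (fst (snd t)) (snd (snd t))).
  assert (h1 : 1 <= prob_realizable n p +
      lsum B (fun b => graph_weight p b * lsum (templates n) (fun t => indicator (ev b t)))).
  { rewrite <- (graph_weight_sum p (length (vpairs n))); unfold prob_realizable; fold B.
    change (fold_right Rplus 0 (map ?f B)) with (lsum B f); rewrite <- lsum_plus.
    apply lsum_le; intros b _; pose proof (graph_weight_nonneg p b hp).
    pose proof (indicator_exists_le (templates n) (ev b)).
    enough (1 <= indicator (realizable_R2 n (adj n b)) +
                 indicator (exists t, In t (templates n) /\ ev b t)) by nra.
    pose proof (indicator_bounds (realizable_R2 n (adj n b))).
    pose proof (indicator_bounds (exists t, In t (templates n) /\ ev b t)).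
    destruct (classic (exists l c1 c2, two_chord_path (adj n b) l c1 c2)) as [[l [c1 [c2 ht]]]|hno].
    - rewrite (indicator_true (exists t, _)); [lra|].
      exists (l, (c1, c2)); split; [apply (two_chord_path_In_templates n b) | ]; exact ht.
    - rewrite (indicator_true (realizable_R2 _ _)); [lra|].
      apply realizable_R2_of_no_two_chord_path; intros l c1 c2 ht; eauto. }
  enough (lsum B (fun b => graph_weight p b * lsum (templates n) (fun t => indicator (ev b t)))
          <= lsum (seq 0 (S n)) (fun k => INR n ^ k * INR k ^ 4 * p ^ S k)) by lra.
  rewrite <- lsum_templates.
  rewrite (lsum_ext _ _ (fun b => lsum (templates n) (fun t => graph_weight p b * indicator (ev b t))))
    by (intros; rewrite lsum_scal; reflexivity).
  rewrite lsum_exchange; apply lsum_le; intros [l [c1 c2]] _.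
  apply prob_two_chord_path_le, hp.
Qed.

Lemma sum_antidifference_le (a b : nat -> R) c M : 0 <= c < 1 ->
  b 0%nat = a 0%nat -> (forall N, b (S N) = b N + a (S N)) -> (forall k, 0 <= b k) ->
  (forall N, sum_f_R0 (fun k => a k * c ^ k) N <= M) ->
  forall N, sum_f_R0 (fun k => b k * c ^ k) N <= M / (1 - c).
Proof.
  intros hc h0 hs hb hM N.
  assert (abel : (1 - c) * sum_f_R0 (fun k => b k * c ^ k) N
                 = sum_f_R0 (fun k => a k * c ^ k) N - b N * c ^ S N).
  { induction N; simpl; [rewrite h0; ring|].
    simpl in IHN; rewrite Rmult_plus_distr_l, IHN, hs; ring. }
  assert (0 <= b N * c ^ S N) by (apply Rmult_le_pos; [apply hb | apply pow_le; lra]).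
  specialize (hM N); apply Rmult_le_reg_l with (1 - c); [lra|].
  field_simplify; lra.
Qed.

(* The weights (k+1)...(k+j)/j! = C(k+j, j) are the successive partial sums of each other,
   so [sum_antidifference_le] applied four times gives sum C(k+4,4) c^k <= (1-c)^-5. *)
Lemma sum_pow4_geometric_le c : 0 <= c < 1 ->
  forall N, sum_f_R0 (fun k => INR k ^ 4 * c ^ k) N <= 24 / (1 - c) ^ 5.
Proof.
  intros hc N; assert (hpos : forall k, 0 <= INR k) by apply pos_INR.
  set (b0 := fun k : nat => match k with O => 1 | _ => 0 end).
  set (b1 := fun _ : nat => 1).
  set (b2 := fun k => INR k + 1).
  set (b3 := fun k => (INR k + 1) * (INR k + 2) / 2).
  set (b4 := fun k => (INR k + 1) * (INR k + 2) * (INR k + 3) / 6).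
  set (b5 := fun k => (INR k + 1) * (INR k + 2) * (INR k + 3) * (INR k + 4) / 24).
  assert (s0 : forall N, sum_f_R0 (fun k => b0 k * c ^ k) N <= 1)
    by (induction N0; simpl in *; lra).
  assert (s1 : forall N, sum_f_R0 (fun k => b1 k * c ^ k) N <= 1 / (1 - c)).
  { apply sum_antidifference_le with b0; auto; intros; unfold b0, b1; lra. }
  assert (s2 : forall N, sum_f_R0 (fun k => b2 k * c ^ k) N <= 1 / (1 - c) / (1 - c)).
  { apply sum_antidifference_le with b1; auto; intros; unfold b1, b2; rewrite ?S_INR;
      simpl; try specialize (hpos k); lra. }
  assert (s3 : forall N, sum_f_R0 (fun k => b3 k * c ^ k) N <= 1 / (1 - c) / (1 - c) / (1 - c)).
  { apply sum_antidifference_le with b2; auto; intros; unfold b2, b3; rewrite ?S_INR;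
      simpl; try field; specialize (hpos k); nra. }
  assert (s4 : forall N, sum_f_R0 (fun k => b4 k * c ^ k) N
                         <= 1 / (1 - c) / (1 - c) / (1 - c) / (1 - c)).
  { apply sum_antidifference_le with b3; auto; intros; unfold b3, b4; rewrite ?S_INR;
      simpl; try field; specialize (hpos k);
      apply Rmult_le_pos; [apply Rmult_le_pos|]; nra. }
  assert (s5 : forall N, sum_f_R0 (fun k => b5 k * c ^ k) N
                         <= 1 / (1 - c) / (1 - c) / (1 - c) / (1 - c) / (1 - c)).
  { apply sum_antidifference_le with b4; auto; intros; unfold b4, b5; rewrite ?S_INR;
      simpl; try field; specialize (hpos k);
      apply Rmult_le_pos; [repeat apply Rmult_le_pos|]; nra. }
  apply Rle_trans with (24 * sum_f_R0 (fun k => b5 k * c ^ k) N).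
  - rewrite scal_sum; apply sum_Rle; intros k _.
    assert (0 <= c ^ k) by (apply pow_le; lra).
    assert (INR k ^ 4 <= (INR k + 1) * (INR k + 2) * (INR k + 3) * (INR k + 4)).
    { specialize (hpos k); replace (INR k ^ 4) with (INR k * INR k * INR k * INR k) by ring.
      repeat apply Rmult_le_compat; repeat apply Rmult_le_pos; lra. }
    unfold b5; nra.
  - specialize (s5 N); replace (24 / (1 - c) ^ 5) with (24 * (1 / (1 - c) / (1 - c) / (1 - c)
      / (1 - c) / (1 - c))) by (field; lra); lra.
Qed.

Lemma prob_realizable_le_1 n p : 0 <= p <= 1 -> prob_realizable n p <= 1.
Proof.
  intros hp; rewrite <- (graph_weight_sum p (length (vpairs n))); unfold prob_realizable.
  change (fold_right Rplus 0 (map ?f ?B)) with (lsum B f); apply lsum_le; intros b _.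
  pose proof (graph_weight_nonneg p b hp).
  pose proof (indicator_bounds (realizable_R2 n (adj n b))); nra.
Qed.

Lemma prob_realizable_error_le c n : 0 <= c < 1 -> (1 <= n)%nat ->
  Rabs (prob_realizable n (c / INR n) - 1) <= c * (24 / (1 - c) ^ 5) / INR n.
Proof.
  intros hc hn; assert (hN : 1 <= INR n) by (apply (le_INR 1); exact hn).
  assert (hp : 0 <= c / INR n <= 1).
  { split; [apply Rmult_le_pos; [lra | apply Rlt_le, Rinv_0_lt_compat; lra]|].
    apply Rmult_le_reg_r with (INR n); [lra|]; field_simplify; lra. }
  pose proof (prob_realizable_le_1 n _ hp) as hle.
  pose proof (prob_not_realizable_le n _ hp) as hge.
  rewrite (lsum_ext _ _ (fun k => c / INR n * (INR k ^ 4 * c ^ k))) in hge.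
  2: { intros k _; unfold Rdiv; rewrite Rpow_mult_distr, pow_inv.
       replace (S k) with (k + 1)%nat by lia; rewrite !pow_add; simpl pow.
       field; split; [lra | apply pow_nonzero; lra]. }
  rewrite lsum_scal, lsum_seq in hge.
  pose proof (sum_pow4_geometric_le c hc n) as hsum.
  assert (c / INR n * sum_f_R0 (fun k => INR k ^ 4 * c ^ k) n <= c / INR n * (24 / (1 - c) ^ 5))
    by (apply Rmult_le_compat_l; lra).
  rewrite Rabs_left1 by lra.
  replace (c * (24 / (1 - c) ^ 5) / INR n) with (c / INR n * (24 / (1 - c) ^ 5)) by (field; lra).
  lra.
Qed.

Lemma Un_cv_of_inv_bound (u : nat -> R) (l K : R) :
  (forall n, (1 <= n)%nat -> Rabs (u n - l) <= K / INR n) -> Un_cv u l.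
Proof.
  intros H eps heps; destruct (INR_unbounded (K / eps)) as [N hN].
  exists (S N); intros n hn; unfold R_dist.
  assert (hn' : INR N + 1 <= INR n) by (rewrite <- S_INR; apply le_INR; exact hn).
  pose proof (pos_INR N).
  apply Rle_lt_trans with (K / INR n); [apply H; lia|].
  apply Rmult_lt_reg_r with (INR n); [lra|]; unfold Rdiv; rewrite Rmult_assoc, Rinv_l by lra.
  assert (K < eps * INR N).
  { apply Rmult_lt_reg_r with (/ eps); [apply Rinv_0_lt_compat; lra|].
    replace (eps * INR N * / eps) with (INR N) by (field; lra); exact hN. }
  nra.
Qed.

Theorem theorem5 (c : R) (hc0 : 0 <= c) (hc : c < 1) :
  Un_cv (fun n : nat => prob_realizable n (c / INR n)) 1.
Proof.
  apply Un_cv_of_inv_bound with (K := c * (24 / (1 - c) ^ 5)); intros n hn.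
  apply prob_realizable_error_le; [lra | exact hn].
Qed.
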